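(* For $A\in\mathcal{M}_s(\mathbb{N}^d)$ the following are equivalent: (i) $A$ has a convolutional inverse; (ii) $A$ is row equivalent to the identity sequence $\mathbbm{I}_s$; (iii) $A$ can be written as the convolution of a finite sequence of elementary matrix sequences.
   Context: $\mathcal{M}_s(\mathbb{N}^d)$ is the set of functions $\mathbb{N}^d\to\mathbb{R}^{s\times s}$, viewed equivalently as $s\times s$ matrices of real sequences on $\mathbb{N}^d$. Convolution: $[A*B](k)=\sum_{l+l'=k,\,l,l'\in\mathbb{N}^d}A(l)B(l')$. $\mathbbm{I}_s(0_d)=I_s$ and $\mathbbm{I}_s(k)=O_s$ for $k\ne0_d$; $A$ has a convolutional inverse if $A*B=B*A=\mathbbm{I}_s$ for some $B$. A real sequence $\alpha$ is convolutionally invertible if it has a convolutional inverse for $s=1$. Elementary row operations: (1) swapping two rows; (2) replacing a row by its entrywise convolution with a convolutionally invertible real sequence; (3) replacing row $j$ by row $j$ plus row $i$ ($i\ne j$) convolved entrywise with a convolutionally invertible real sequence. An elementary matrix sequence is one obtained by a single elementary row operation from $\mathbbm{I}_s$. $A$ and $B$ are row equivalent if one can be obtained from the other by a finite sequence of elementary row operations. *)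

From HB Require Import structures.
From mathcomp Require Import all_boot all_order all_algebra.
From mathcomp Require Import reals.
From Stdlib Require Import Relations.
Set Implicit Arguments. Unset Strict Implicit. Unset Printing Implicit Defensive.
Import Order.TTheory GRing.Theory Num.Theory.
Local Open Scope ring_scope.

Notation idx d := {ffun 'I_d -> nat}.
Definition idx0 d : idx d := [ffun => 0%N].

(* For k in N^d, the pairs (l, l') with l + l' = k are in bijection with
   the l <= k (componentwise), l' = k - l.  Such l are enumerated as
   functions 'I_d -> 'I_(max_i k_i).+1 subject to l <= k. *)
Definition idx_bnd d (k : idx d) : nat := (\max_(i < d) k i)%N.
Definition lo d (k : idx d) (l : {ffun 'I_d -> 'I_(idx_bnd k).+1}) : idx d :=
  [ffun i => nat_of_ord (l i)].
Definition hi d (k : idx d) (l : {ffun 'I_d -> 'I_(idx_bnd k).+1}) : idx d :=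
  [ffun i => (k i - l i)%N].

Definition sum_split {V : nmodType} d (k : idx d) (F : idx d -> idx d -> V) : V :=
  \sum_(l : {ffun 'I_d -> 'I_(idx_bnd k).+1} | [forall i, (l i <= k i)%N])
     F (@lo d k l) (@hi d k l).

Section Defs.
Variable R : realType.

Definition mseq d s := idx d -> 'M[R]_s.
Definition rseq d := idx d -> R.

Definition mconv d s (A B : mseq d s) : mseq d s :=
  fun k => sum_split k (fun l l' => A l *m B l').

Definition rconv d (a b : rseq d) : rseq d :=
  fun k => sum_split k (fun l l' => a l * b l').

Definition Iseq d s : mseq d s :=
  fun k => if k == idx0 d then 1%:M else 0.

Definition has_conv_inverse d s (A : mseq d s) : Prop :=
  exists B : mseq d s, mconv A B = @Iseq d s /\ mconv B A = @Iseq d s.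

Definition rseq_invertible d (a : rseq d) : Prop :=
  has_conv_inverse (fun k => (a k)%:M : 'M[R]_1).

Inductive elem_op d s (A B : mseq d s) : Prop :=
| EOswap (i j : 'I_s) :
    (forall k, B k = xrow i j (A k)) -> elem_op A B
| EOscale (i : 'I_s) (a : rseq d) :
    rseq_invertible a ->
    (forall k, B k = \matrix_(r, c)
        (if r == i then rconv a (fun l => A l i c) k else A k r c)) ->
    elem_op A B
| EOadd (i j : 'I_s) (a : rseq d) :
    i != j -> rseq_invertible a ->
    (forall k, B k = \matrix_(r, c)
        (if r == j then A k j c + rconv a (fun l => A l i c) k else A k r c)) ->
    elem_op A B.

Definition elementary d s (E : mseq d s) : Prop := elem_op (@Iseq d s) E.

Definition row_equiv d s (A B : mseq d s) : Prop :=
  clos_refl_trans _ (@elem_op d s) A B \/ clos_refl_trans _ (@elem_op d s) B A.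

Definition mconv_list d s (Es : seq (mseq d s)) : mseq d s :=
  foldr (@mconv d s) (@Iseq d s) Es.

Definition all_elementary d s (Es : seq (mseq d s)) : Prop :=
  foldr (fun E P => @elementary d s E /\ P) True Es.

End Defs.

(* Convolution turns M_s(N^d) into a ring with unit I.  A convolution inverse of A forces
   A(0) to be an invertible matrix, and a real sequence a is invertible as soon as
   a(0) <> 0, its inverse being computed coefficientwise by recursion on |k|.  Every
   elementary row operation f acts as left convolution by the elementary sequence f(I),
   and its inverse is again elementary: this gives (ii) <-> (iii) and (ii) -> (i).  For
   (i) -> (ii), Gauss-Jordan elimination runs column by column: invertibility of A(0)
   yields a pivot entry whose value at 0 is nonzero, hence an invertible sequence by
   which the pivot row can be divided, and row additions then clear the rest of the
   column. *)

From mathcomp Require Import all_boot all_order all_algebra reals.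
From mathcomp Require Import boolp perm.
From Stdlib Require Import Relations.
Set Implicit Arguments. Unset Strict Implicit. Unset Printing Implicit Defensive.
Import Order.TTheory GRing.Theory Num.Theory.
Local Open Scope ring_scope.

Section MultiIndex.
Variable d : nat.
Implicit Types k l m n : idx d.

Definition leidx l k : bool := [forall i, (l i <= k i)%N].
Definition subidx k l : idx d := [ffun i => (k i - l i)%N].
Definition addidx m n : idx d := [ffun i => (m i + n i)%N].
Definition idx_size k : nat := (\sum_(i < d) k i)%N.

Definition box k : seq (idx d) :=
  map (@lo d k)
    (enum [pred l : {ffun 'I_d -> 'I_(idx_bnd k).+1} | [forall i, (l i <= k i)%N]]).

Lemma leidxP l k : reflect (forall i, (l i <= k i)%N) (leidx l k).
Proof. exact: forallP. Qed.

Lemma le0idx k : leidx (idx0 d) k.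
Proof. by apply/leidxP => i; rewrite ffunE. Qed.

Lemma leidx_trans m l k : leidx m l -> leidx l k -> leidx m k.
Proof. by move=> /leidxP Hml /leidxP Hlk; apply/leidxP => i; apply: leq_trans (Hlk i). Qed.

Lemma leidx_subidx l k : leidx (subidx k l) k.
Proof. by apply/leidxP => i; rewrite ffunE leq_subr. Qed.

Lemma leidx0 k : leidx k (idx0 d) -> k = idx0 d.
Proof.
by move/leidxP => Hk; apply/ffunP => i; apply/eqP; have := Hk i; rewrite !ffunE leqn0.
Qed.

Lemma subidx0 k : subidx k (idx0 d) = k.
Proof. by apply/ffunP => i; rewrite !ffunE subn0. Qed.

Lemma subidxK l k : leidx l k -> subidx k (subidx k l) = l.
Proof. by move/leidxP => Hl; apply/ffunP => i; rewrite !ffunE subKn. Qed.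

Lemma addKidx m n : subidx (addidx m n) m = n.
Proof. by apply/ffunP => i; rewrite !ffunE addKn. Qed.

Lemma subidxDr k m n : subidx k (addidx m n) = subidx (subidx k m) n.
Proof. by apply/ffunP => i; rewrite !ffunE subnDA. Qed.

Lemma idx_size_subidx l k :
  leidx l k -> l != idx0 d -> (idx_size (subidx k l) < idx_size k)%N.
Proof.
move=> /leidxP Hl l0.
have -> : idx_size k = (idx_size (subidx k l) + idx_size l)%N.
  by rewrite /idx_size -big_split; apply: eq_bigr => i _; rewrite ffunE /= subnK.
rewrite -{1}[idx_size _]addn0 ltn_add2l lt0n /idx_size sum_nat_eq0.
apply: contra l0 => /forallP l0; apply/eqP/ffunP => i; rewrite ffunE; exact/eqP/l0.
Qed.

Lemma box_uniq k : uniq (box k).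
Proof.
rewrite map_inj_in_uniq ?enum_uniq // => x y _ _ /ffunP Exy.
by apply/ffunP => i; apply: val_inj; have := Exy i; rewrite !ffunE.
Qed.

Lemma mem_box k l : (l \in box k) = leidx l k.
Proof.
apply/mapP/idP => [[x + ->]|/leidxP Hl].
  by rewrite mem_enum inE => /forallP Hx; apply/leidxP => i; rewrite ffunE.
have Hbnd i : (l i < (idx_bnd k).+1)%N.
  by rewrite ltnS (leq_trans (Hl i)) // (leq_bigmax_cond (F := fun i => k i)).
exists [ffun i => Ordinal (Hbnd i)]; last by apply/ffunP => i; rewrite !ffunE.
by rewrite mem_enum inE; apply/forallP => i; rewrite ffunE; exact: Hl.
Qed.

Lemma sum_splitE (V : nmodType) k (F : idx d -> idx d -> V) :
  sum_split k F = \sum_(l <- box k) F l (subidx k l).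
Proof.
rewrite /sum_split /box big_map big_enum_cond /=.
apply: eq_big => [x|x _]; first by rewrite inE andbT.
by congr (F _ _); apply/ffunP => i; rewrite !ffunE.
Qed.

Lemma eq_sum_split (V : nmodType) k (F G : idx d -> idx d -> V) :
  (forall l l', F l l' = G l l') -> sum_split k F = sum_split k G.
Proof. by move=> EFG; apply: eq_bigr => l _; apply: EFG. Qed.

Lemma sum_split_perm (V : nmodType) k S (F : idx d -> idx d -> V) :
  uniq S -> S =i [pred l | leidx l k] ->
  sum_split k F = \sum_(l <- S) F l (subidx k l).
Proof.
move=> uS ES; rewrite sum_splitE; apply/perm_big/uniq_perm => //; first exact: box_uniq.
by move=> l; rewrite mem_box ES.
Qed.

Lemma sum_split0 (V : nmodType) (F : idx d -> idx d -> V) :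
  sum_split (idx0 d) F = F (idx0 d) (idx0 d).
Proof.
rewrite (@sum_split_perm _ _ [:: idx0 d]) ?big_seq1 ?subidx0 // => l.
by rewrite !inE; apply/eqP/idP => [->|/leidx0 //]; exact: le0idx.
Qed.

Lemma sum_split_idx0l (V : nmodType) k (f : idx d -> V) :
  sum_split k (fun l l' => if l == idx0 d then f l' else 0) = f k.
Proof.
rewrite sum_splitE (bigD1_seq (idx0 d)) ?box_uniq ?mem_box ?le0idx //=.
by rewrite eqxx subidx0 big1 ?addr0 // => l /negbTE ->.
Qed.

Lemma sum_split_comm (V : nmodType) k (F : idx d -> idx d -> V) :
  sum_split k F = sum_split k (fun l l' => F l' l).
Proof.
rewrite [RHS](@sum_split_perm _ k (map (subidx k) (box k))).
- rewrite big_map sum_splitE !big_seq; apply: eq_bigr => l.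
  by rewrite mem_box => Hl; rewrite subidxK.
- rewrite map_inj_in_uniq ?box_uniq // => x y; rewrite !mem_box => Hx Hy Exy.
  by rewrite -(subidxK Hx) Exy subidxK.
- move=> l; rewrite inE; apply/mapP/idP => [[x _ ->]|Hl]; first exact: leidx_subidx.
  by exists (subidx k l); rewrite ?mem_box ?leidx_subidx ?subidxK.
Qed.

Lemma perm_box_ge k m : leidx m k ->
  perm_eq [seq l <- box k | leidx m l] (map (addidx m) (box (subidx k m))).
Proof.
move=> /leidxP Hm; apply: uniq_perm.
- by rewrite filter_uniq ?box_uniq.
- rewrite map_inj_in_uniq ?box_uniq // => x y _ _ Exy.
  by rewrite -(addKidx m x) Exy addKidx.
move=> l; rewrite mem_filter mem_box; apply/andP/mapP => [[/leidxP Hml /leidxP Hlk]|[n]].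
  exists (subidx l m); last by apply/ffunP => i; rewrite !ffunE subnKC.
  by rewrite mem_box; apply/leidxP => i; rewrite !ffunE leq_sub2r.
rewrite mem_box => /leidxP Hn ->.
split; apply/leidxP => i; rewrite ffunE; first exact: leq_addr.
by rewrite -leq_subRL //; have := Hn i; rewrite ffunE.
Qed.

Lemma sum_split_assoc (V : nmodType) k (f : idx d -> idx d -> idx d -> V) :
  sum_split k (fun l l' => sum_split l (fun m m' => f m m' l')) =
  sum_split k (fun m r => sum_split r (fun n o => f m n o)).
Proof.
have Einner l : l \in box k -> sum_split l (fun m m' => f m m' (subidx k l)) =
    \sum_(m <- box k | leidx m l) f m (subidx l m) (subidx k l).
  rewrite mem_box => Hl; rewrite -big_filter; apply: sum_split_perm.
    by rewrite filter_uniq ?box_uniq.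
  move=> m; rewrite mem_filter mem_box inE.
  by apply/andP/idP => [[]//|Hm]; split => //; exact: leidx_trans Hm Hl.
rewrite sum_splitE big_seq (eq_bigr _ Einner) -big_seq.
rewrite (exchange_big_dep xpredT) //= sum_splitE !big_seq.
apply: eq_bigr => m; rewrite mem_box => Hm.
rewrite -big_filter (perm_big _ (perm_box_ge Hm)) big_map sum_splitE.
by apply: eq_bigr => n _; rewrite addKidx subidxDr.
Qed.

End MultiIndex.

Section RealConvolution.
Variables (R : realType) (d : nat).
Local Notation rseq := (rseq R d).
Implicit Types a b c : rseq.

Definition delta : rseq := fun k => if k == idx0 d then 1 else 0.

Lemma rconvC a b : rconv a b = rconv b a.
Proof.
apply/funext => k; rewrite /rconv sum_split_comm.
by apply: eq_sum_split => l l'; rewrite mulrC.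
Qed.

Lemma rconvA a b c : rconv (rconv a b) c = rconv a (rconv b c).
Proof.
apply/funext => k; rewrite /rconv.
transitivity (sum_split k (fun l l' => sum_split l (fun m m' => a m * b m' * c l'))).
  by apply: eq_sum_split => l l'; rewrite mulr_suml.
rewrite sum_split_assoc; apply: eq_sum_split => m n.
by rewrite mulr_sumr; apply: eq_bigr => i _; rewrite mulrA.
Qed.

Lemma rconv1 b : rconv delta b = b.
Proof.
apply/funext => k; rewrite /rconv -[RHS](sum_split_idx0l k b).
by apply: eq_sum_split => l l'; rewrite /delta; case: eqP; rewrite ?mul1r ?mul0r.
Qed.

Lemma rconvr1 a : rconv a delta = a.
Proof. by rewrite rconvC rconv1. Qed.

Lemma rconvDl a b c k : rconv (fun l => a l + b l) c k = rconv a c k + rconv b c k.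
Proof. by rewrite /rconv /sum_split -big_split; apply: eq_bigr => l _; rewrite mulrDl. Qed.

Lemma rconvMl a b (x : R) k : rconv (fun l => a l * x) b k = rconv a b k * x.
Proof. by rewrite /rconv /sum_split mulr_suml; apply: eq_bigr => l _; rewrite mulrAC. Qed.

Lemma rconvMr a b (x : R) k : rconv a (fun l => b l * x) k = rconv a b k * x.
Proof. by rewrite /rconv /sum_split mulr_suml; apply: eq_bigr => l _; rewrite mulrA. Qed.

Lemma rconvNN a b : rconv (fun l => - a l) (fun l => - b l) = rconv a b.
Proof. by apply/funext => k; apply: eq_sum_split => l l'; rewrite mulrNN. Qed.

Lemma rconv0l b : rconv (fun _ => 0) b = fun _ => 0.
Proof. by apply/funext => k; rewrite /rconv /sum_split big1 // => l _; rewrite mul0r. Qed.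

Lemma rconv0r a : rconv a (fun _ => 0) = fun _ => 0.
Proof. by rewrite rconvC rconv0l. Qed.

Lemma mconv_scalar n b b' :
  mconv (fun k => (b k)%:M : 'M[R]_n) (fun k => (b' k)%:M) = fun k => (rconv b b' k)%:M.
Proof.
apply: funext => k; rewrite /mconv /rconv /sum_split raddf_sum.
by apply: eq_bigr => l _; rewrite -scalar_mxM.
Qed.

Lemma Iseq_scalar n : @Iseq R d n = fun k => (delta k)%:M.
Proof. by apply: funext => k; rewrite /Iseq /delta; case: eqP; rewrite ?raddf0. Qed.

Lemma rseq_invertibleP a : rseq_invertible a <-> exists b, rconv a b = delta.
Proof.
split => [[B [AB _]]|[b ab]].
  have EB : B = fun k => (B k 0 0)%:M by apply: funext => k; exact: mx11_scalar.
  rewrite EB mconv_scalar Iseq_scalar in AB.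
  exists (fun k => B k 0 0); apply/funext => k.
  by move: (congr1 (fun f : mseq R d 1 => f k 0 0) AB); rewrite !mxE !mulr1n.
exists (fun k => (b k)%:M).
by rewrite !mconv_scalar Iseq_scalar [rconv b a]rconvC ab; split.
Qed.

(* Fuel-driven form of the recursion b(k) = - a(0)^-1 * sum_(0 < l <= k) a(l) b(k - l)
   for the inverse b of a. *)
Fixpoint rinv_rec a (n : nat) (k : idx d) : R :=
  if n is n'.+1 then
    if k == idx0 d then (a (idx0 d))^-1
    else - (a (idx0 d))^-1 *
      \sum_(l <- box k | l != idx0 d) a l * rinv_rec a n' (subidx k l)
  else 0.

Lemma rinv_recS a n k : rinv_rec a n.+1 k =
  if k == idx0 d then (a (idx0 d))^-1
  else - (a (idx0 d))^-1 * \sum_(l <- box k | l != idx0 d) a l * rinv_rec a n (subidx k l).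
Proof. by []. Qed.

Arguments rinv_rec : simpl never.

Lemma rinv_rec_stable a n n' k :
  (idx_size k < n)%N -> (idx_size k < n')%N -> rinv_rec a n k = rinv_rec a n' k.
Proof.
elim: n n' k => // n IH [//|n'] k Hn Hn'; rewrite !rinv_recS; case: eqP => [//|_].
suff -> : \sum_(l <- box k | l != idx0 d) a l * rinv_rec a n (subidx k l) =
          \sum_(l <- box k | l != idx0 d) a l * rinv_rec a n' (subidx k l) by [].
rewrite big_seq_cond [RHS]big_seq_cond; apply: eq_bigr => l /andP[]; rewrite mem_box => Hl Hl0.
have Hsub := idx_size_subidx Hl Hl0.
by rewrite (IH n') //; [exact: leq_trans Hsub Hn | exact: leq_trans Hsub Hn'].
Qed.

Lemma rseq_invertible_unit0 a : a (idx0 d) != 0 -> rseq_invertible a.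
Proof.
move=> a0; apply/rseq_invertibleP; exists (fun k => rinv_rec a (idx_size k).+1 k).
apply/funext => k; rewrite /rconv sum_splitE.
rewrite (bigD1_seq (idx0 d)) ?box_uniq ?mem_box ?le0idx //= subidx0 rinv_recS /delta.
case: eqP => [->|/eqP k0].
  rewrite big_seq_cond big1 => [|l /andP[]]; first by rewrite mulfV // addr0.
  by rewrite mem_box => /leidx0 ->; rewrite eqxx.
rewrite mulrA mulrN mulfV // mulN1r addrC; apply/eqP; rewrite subr_eq0; apply/eqP.
rewrite big_seq_cond [RHS]big_seq_cond; apply: eq_bigr => l /andP[].
rewrite mem_box => Hl Hl0.
by rewrite (@rinv_rec_stable _ _ (idx_size k)) //; exact: idx_size_subidx.
Qed.

End RealConvolution.

Arguments delta {R d}.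

Section MatrixSequences.
Variables (R : realType) (d s : nat).
Local Notation mseq := (mseq R d s).
Local Notation rseq := (rseq R d).
Local Notation I := (@Iseq R d s).
Implicit Types (A B C M X : mseq) (a b : rseq).

Lemma mconvA A B C : mconv (mconv A B) C = mconv A (mconv B C).
Proof.
apply: funext => k; rewrite /mconv.
transitivity (sum_split k (fun l l' => sum_split l (fun m m' => A m *m B m' *m C l'))).
  by apply: eq_sum_split => l l'; rewrite mulmx_suml.
rewrite sum_split_assoc; apply: eq_sum_split => m n.
by rewrite mulmx_sumr; apply: eq_bigr => i _; rewrite mulmxA.
Qed.

Lemma mconv1m A : mconv I A = A.
Proof.
apply: funext => k; rewrite /mconv -[RHS](sum_split_idx0l k A).
by apply: eq_sum_split => l l'; rewrite /Iseq; case: eqP; rewrite ?mul1mx ?mul0mx.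
Qed.

Lemma mconv_idx0 A B : mconv A B (idx0 d) = A (idx0 d) *m B (idx0 d).
Proof. exact: sum_split0. Qed.

Lemma has_conv_inverse_mconv A B :
  has_conv_inverse A -> has_conv_inverse B -> has_conv_inverse (mconv A B).
Proof.
move=> [A' [AA' A'A]] [B' [BB' B'B]]; exists (mconv B' A'); split.
  by rewrite mconvA -(mconvA B) BB' mconv1m.
by rewrite mconvA -(mconvA A') A'A mconv1m.
Qed.

Lemma has_conv_inverse_unit0 A : has_conv_inverse A -> A (idx0 d) \in unitmx.
Proof.
move=> [B [AB _]]; have := congr1 (fun F : mseq => F (idx0 d)) AB.
by rewrite /= mconv_idx0 /Iseq eqxx => /mulmx1_unit[].
Qed.

Lemma Iseq_entry l (r c : 'I_s) : I l r c = delta l * (r == c)%:R.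
Proof. by rewrite /Iseq /delta; case: eqP; rewrite ?mxE ?mul1r ?mul0r. Qed.

Lemma has_conv_inverse_Iseq : has_conv_inverse I.
Proof. by exists I; rewrite mconv1m. Qed.

Lemma rconv_Iseq a (i t : 'I_s) k : rconv a (fun l => I l i t) k = a k * (i == t)%:R.
Proof.
have -> : (fun l => I l i t) = fun l => delta l * (i == t)%:R.
  by apply: funext => l; rewrite Iseq_entry.
by rewrite rconvMr rconvr1.
Qed.

Lemma mconv_entry M X k r c :
  mconv M X k r c = \sum_t rconv (fun l => M l r t) (fun l => X l t c) k.
Proof.
rewrite /mconv /rconv /sum_split summxE exchange_big.
by apply: eq_bigr => l _; rewrite mxE.
Qed.

Lemma mconv_row M X k r c a b (i j : 'I_s) :
  (forall l t, M l r t = a l * (i == t)%:R + b l * (j == t)%:R) ->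
  mconv M X k r c = rconv a (fun l => X l i c) k + rconv b (fun l => X l j c) k.
Proof.
move=> EM; have pick (x : 'I_s -> R) u : \sum_t x t * (u == t)%:R = x u.
  rewrite (bigD1 u) //= eqxx mulr1 big1 ?addr0 // => t Htu.
  by rewrite eq_sym (negbTE Htu) mulr0.
rewrite mconv_entry -(pick (fun t => rconv a (fun l => X l t c) k) i).
rewrite -(pick (fun t => rconv b (fun l => X l t c) k) j) -big_split.
apply: eq_bigr => t _ /=; rewrite -!rconvMl -rconvDl.
by congr (rconv _ _ k); apply: funext => l; rewrite EM.
Qed.

Lemma mconv_Irow M X k r r' c :
  (forall l t, M l r t = I l r' t) -> mconv M X k r c = X k r' c.
Proof.
move=> EM; rewrite (@mconv_row _ _ _ _ _ delta (fun _ => 0) r' r') => [|l t].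
  by rewrite rconv1 rconv0l addr0.
by rewrite EM Iseq_entry mul0r addr0.
Qed.

Definition swap_rows (i j : 'I_s) X : mseq := fun k => xrow i j (X k).
Definition scale_row (i : 'I_s) a X : mseq := fun k =>
  \matrix_(r, c) (if r == i then rconv a (fun l => X l i c) k else X k r c).
Definition add_row (i j : 'I_s) a X : mseq := fun k =>
  \matrix_(r, c) (if r == j then X k j c + rconv a (fun l => X l i c) k else X k r c).

Lemma swap_rowsE i j X k r c : swap_rows i j X k r c = X k (tperm i j r) c.
Proof. by rewrite /swap_rows /xrow /row_perm mxE. Qed.

Inductive row_op : (mseq -> mseq) -> Prop :=
| RowOpSwap i j : row_op (swap_rows i j)
| RowOpScale i a : rseq_invertible a -> row_op (scale_row i a)
| RowOpAdd i j a : i != j -> rseq_invertible a -> row_op (add_row i j a).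

Lemma elem_opP A B : elem_op A B <-> exists2 f, row_op f & B = f A.
Proof.
split=> [|[f [i j|i a Ha|i j a ij Ha] ->]].
- case=> [i j EB|i a Ha EB|i j a ij Ha EB].
  + by exists (swap_rows i j); [constructor | apply: funext].
  + by exists (scale_row i a); [constructor | apply: funext].
  + by exists (add_row i j a); [constructor | apply: funext].
- exact: (EOswap (i := i) (j := j)).
- exact: (EOscale (i := i) Ha).
- exact: (EOadd ij Ha).
Qed.

Lemma row_op_mconv f X : row_op f -> f X = mconv (f I) X.
Proof.
case=> [i j|i a _|i j a _ _]; apply: funext => k; apply/matrixP => r c.
- by rewrite (@mconv_Irow _ _ _ _ (tperm i j r)) => [|l t]; rewrite swap_rowsE.
- rewrite /scale_row mxE; case: eqP => [->|/eqP ri].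
    rewrite (@mconv_row _ _ _ _ _ a (fun _ => 0) i i) => [|l t].
      by rewrite rconv0l addr0.
    by rewrite mxE eqxx rconv_Iseq mul0r addr0.
  by rewrite (@mconv_Irow _ _ _ _ r) => [//|l t]; rewrite mxE (negbTE ri).
- rewrite /add_row mxE; case: eqP => [->|/eqP rj].
    rewrite (@mconv_row _ _ _ _ _ delta a j i) => [|l t]; first by rewrite rconv1.
    by rewrite mxE eqxx rconv_Iseq Iseq_entry.
  by rewrite (@mconv_Irow _ _ _ _ r) => [//|l t]; rewrite mxE (negbTE rj).
Qed.

Lemma swap_rowsK i j : involutive (swap_rows i j).
Proof. by move=> X; apply: funext => k; apply/matrixP => r c; rewrite !swap_rowsE tpermK. Qed.

Lemma scale_rowM i a b X : scale_row i a (scale_row i b X) = scale_row i (rconv a b) X.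
Proof.
apply: funext => k; apply/matrixP => r c; rewrite !mxE; case: eqP => [_|//].
have -> : (fun l => scale_row i b X l i c) = rconv b (fun l => X l i c).
  by apply: funext => l; rewrite mxE eqxx.
by rewrite rconvA.
Qed.

Lemma scale_row1 i X : scale_row i delta X = X.
Proof.
by apply: funext => k; apply/matrixP => r c; rewrite mxE rconv1; case: eqP => [->|].
Qed.

Lemma add_rowD i j a b X : i != j ->
  add_row i j a (add_row i j b X) = add_row i j (fun l => b l + a l) X.
Proof.
move=> ij; apply: funext => k; apply/matrixP => r c; rewrite !mxE; case: eqP => [_|//].
have -> : (fun l => add_row i j b X l i c) = fun l => X l i c.
  by apply: funext => l; rewrite mxE (negbTE ij).
by rewrite eqxx rconvDl addrA.
Qed.

Lemma add_row0 i j X : add_row i j (fun _ => 0) X = X.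
Proof.
by apply: funext => k; apply/matrixP => r c; rewrite mxE rconv0l addr0; case: eqP => [->|].
Qed.

Lemma row_op_inv f : row_op f -> exists2 g, row_op g & cancel f g /\ cancel g f.
Proof.
case=> [i j|i a Ha|i j a ij Ha].
- by exists (swap_rows i j); [constructor | split; exact: swap_rowsK].
- move/rseq_invertibleP: (Ha) => [b ab]; have ba : rconv b a = delta by rewrite rconvC.
  exists (scale_row i b); first by constructor; apply/rseq_invertibleP; exists a.
  by split=> X; rewrite scale_rowM ?ab ?ba scale_row1.
- exists (add_row i j (fun l => - a l)).
    constructor => //; move/rseq_invertibleP: Ha => [b ab].
    by apply/rseq_invertibleP; exists (fun l => - b l); rewrite rconvNN.
  split=> X; rewrite add_rowD // -[RHS](add_row0 i j); congr add_row.
    by apply: funext => l; rewrite addrN.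
  by apply: funext => l; rewrite addNr.
Qed.

End MatrixSequences.

Section RowEquivalence.
Variables (R : realType) (d s : nat).
Local Notation mseq := (mseq R d s).
Local Notation I := (@Iseq R d s).
Local Notation reach := (clos_refl_trans _ (@elem_op R d s)).
Implicit Types (A B X : mseq).

Lemma reach_row_op f X : row_op f -> reach X (f X).
Proof. by move=> rf; apply/rt_step/elem_opP; exists f. Qed.

Lemma reach_swap_rows (i j : 'I_s) X : reach X (swap_rows i j X).
Proof. by apply: reach_row_op; constructor. Qed.

Lemma reach_scale_row (i : 'I_s) a X : rseq_invertible a -> reach X (scale_row i a X).
Proof. by move=> ainv; apply: reach_row_op; constructor. Qed.

Lemma reach_sym A B : reach A B -> reach B A.
Proof.
elim=> [X Y XY|X|X Y Z _ YX _ ZY]; [|exact: rt_refl|exact: rt_trans ZY YX].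
move/elem_opP: XY => [f rf ->]; have [g rg [fK _]] := row_op_inv rf.
by rewrite -{2}(fK X); exact: reach_row_op.
Qed.

Lemma row_equivI A : row_equiv A I <-> reach I A.
Proof. by split=> [[/reach_sym|]|] //; right. Qed.

Lemma has_conv_inverse_row_op f : row_op f -> has_conv_inverse (f I).
Proof.
move=> rf; have [g rg [fK gK]] := row_op_inv rf.
exists (g I); split.
  by rewrite -(row_op_mconv _ rf) gK.
by rewrite -(row_op_mconv _ rg) fK.
Qed.

Lemma reach_has_conv_inverse A B :
  reach A B -> has_conv_inverse A -> has_conv_inverse B.
Proof.
elim=> [X Y XY|//|X Y Z _ XY _ YZ /XY/YZ //].
move/elem_opP: XY => [f rf ->]; rewrite (row_op_mconv _ rf); apply: has_conv_inverse_mconv.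
exact: has_conv_inverse_row_op.
Qed.

Lemma reach_I_mconv_list A :
  reach I A <-> exists Es, all_elementary Es /\ A = mconv_list Es.
Proof.
split=> [IA|[Es [HEs ->]]].
  elim: (clos_rt_rtn1 _ _ _ _ IA) => [|Y Z YZ _ [Es [HEs EY]]]; first by exists [::].
  move/elem_opP: YZ => [f rf ->]; rewrite EY.
  exists (f I :: Es); split; last by rewrite /= -(row_op_mconv _ rf).
  by split=> //; apply/elem_opP; exists f.
elim: Es HEs => [_|E Es IH [/elem_opP[f rf ->] HEs]] /=; first exact: rt_refl.
by rewrite -(row_op_mconv _ rf); apply: rt_trans (IH HEs) (reach_row_op _ rf).
Qed.

(* If c(0) = 0, then c = delta + (c - delta) splits the operation into two with
   invertible coefficients. *)
Lemma reach_add_row (i j : 'I_s) c X : i != j -> reach X (add_row i j c X).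
Proof.
move=> ij; have [c0|c0] := eqVneq (c (idx0 d)) 0; last first.
  by apply: reach_row_op; constructor => //; exact: rseq_invertible_unit0.
pose c' l := c l - delta l.
have c'0 : c' (idx0 d) != 0 by rewrite /c' c0 /delta eqxx sub0r oppr_eq0 oner_eq0.
have delta_inv : rseq_invertible (@delta R d).
  by apply/rseq_invertibleP; exists delta; rewrite rconv1.
have -> : add_row i j c X = add_row i j delta (add_row i j c' X).
  by rewrite add_rowD //; congr add_row; apply: funext => l; rewrite subrK.
apply: rt_trans (reach_row_op _ _) (reach_row_op _ _); constructor => //.
exact: rseq_invertible_unit0.
Qed.

End RowEquivalence.

Lemma gtn_ord_eqF n (i j : 'I_n) : (j < i)%N -> (i == j) = false.
Proof. exact: gtn_eqF. Qed.

Lemma ord_ltnS_neq n (r q : 'I_n) : r != q -> (r < q.+1)%N = (r < q)%N.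
Proof.
move=> rq; rewrite ltnS leq_eqVlt; case: eqP => //= /val_inj rq'.
by rewrite rq' eqxx in rq.
Qed.

(* Otherwise row p of M^-1 *m M = 1 would vanish in column p: M^-1 vanishes in row p
   left of p, as 1 does, and column p of M vanishes from row p on. *)
Lemma unitmx_pivot (F : fieldType) n (M : 'M[F]_n) (p : 'I_n) : M \in unitmx ->
  (forall r j : 'I_n, (j < p)%N -> M r j = (r == j)%:R) ->
  exists2 r : 'I_n, (p <= r)%N & M r p != 0.
Proof.
move=> Mu Mcols; apply/exists_inP; apply: contraT; rewrite negb_exists_in.
move=> /forall_inP Mp0; have NM := mulVmx Mu.
have Nrow (i : 'I_n) : (i < p)%N -> invmx M p i = 0.
  move=> ip; have := congr1 (fun N : 'M_n => N p i) NM.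
  rewrite !mxE gtn_ord_eqF // mulr0n => <-.
  rewrite (bigD1 i) //= Mcols // eqxx mulr1 big1 ?addr0 // => t ti.
  by rewrite Mcols // (negbTE ti) mulr0.
have := congr1 (fun N : 'M_n => N p p) NM; rewrite !mxE eqxx big1 => [/eqP|t _].
  by rewrite eq_sym oner_eq0.
have [tp|pt] := ltnP t p; first by rewrite Nrow ?mul0r.
by have := Mp0 t pt; rewrite negbK => /eqP ->; rewrite mulr0.
Qed.

Section Elimination.
Variables (R : realType) (d s : nat).
Local Notation mseq := (mseq R d s).
Local Notation I := (@Iseq R d s).
Local Notation reach := (clos_refl_trans _ (@elem_op R d s)).
Implicit Types (A X : mseq).

Definition eqI_on (S : 'I_s -> 'I_s -> bool) A := forall k r c, S r c -> A k r c = I k r c.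

(* The entries where I has been restored while column P is being cleared: the columns
   left of P, the pivot, and the entries of column P in rows < n. *)
Definition col_cleared (P : 'I_s) (n : nat) (r c : 'I_s) :=
  (c < P)%N || (c == P) && ((r == P) || (r < n)%N).

Lemma eqI_on_sub (S S' : 'I_s -> 'I_s -> bool) A :
  (forall r c, S' r c -> S r c) -> eqI_on S A -> eqI_on S' A.
Proof. by move=> S'S EA k r c /S'S; exact: EA. Qed.

Lemma normalize_pivot (P : 'I_s) A : has_conv_inverse A ->
  eqI_on (fun _ c => (c < P)%N) A -> exists2 A', reach A A' & eqI_on (col_cleared P 0) A'.
Proof.
move=> Ainv EA.
have [r Pr Ar] : exists2 r : 'I_s, (P <= r)%N & A (idx0 d) r P != 0.
  apply: unitmx_pivot (has_conv_inverse_unit0 Ainv) _ => q j jP.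
  by rewrite EA // Iseq_entry /delta eqxx mul1r.
pose A1 := swap_rows r P A.
have EA1 : eqI_on (fun _ c => (c < P)%N) A1.
  move=> k q c cP; rewrite /A1 swap_rowsE EA // !Iseq_entry.
  have [cr cP'] : c != r /\ c != P.
    by split; apply: contraTneq cP => ->; rewrite -?leqNgt ?ltnn.
  by rewrite (canF_eq (tpermK r P)) tpermD // eq_sym.
have A1P : A1 (idx0 d) P P != 0 by rewrite /A1 swap_rowsE tpermR.
have /rseq_invertibleP[b ub] := @rseq_invertible_unit0 R d (fun l => A1 l P P) A1P.
have bu : rconv b (fun l => A1 l P P) = delta by rewrite rconvC.
have binv : rseq_invertible b by apply/rseq_invertibleP; exists (fun l => A1 l P P).
exists (scale_row P b A1).
  exact: rt_trans (reach_swap_rows r P A) (reach_scale_row P A1 binv).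
move=> k q c /orP[cP|/andP[/eqP-> /orP[/eqP->|//]]]; rewrite mxE; last first.
  by rewrite eqxx bu Iseq_entry eqxx mulr1.
case: eqP => [->|_]; last exact: EA1.
have -> : (fun l => A1 l P c) = fun _ => 0.
  by apply: funext => l; rewrite EA1 // Iseq_entry (gtn_ord_eqF cP) mulr0.
by rewrite rconv0r Iseq_entry (gtn_ord_eqF cP) mulr0.
Qed.

Lemma clear_entry (P q : 'I_s) A : q != P ->
  eqI_on (col_cleared P q) A -> exists2 A', reach A A' & eqI_on (col_cleared P q.+1) A'.
Proof.
move=> qP EA; exists (add_row P q (fun l => - A l q P) A).
  by apply: reach_add_row; rewrite eq_sym.
have pivot_row (c : 'I_s) : (c < P)%N || (c == P) -> (fun l => A l P c) = fun l => I l P c.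
  by move=> cP; apply: funext => l; apply: EA; rewrite /col_cleared eqxx /= andbT.
move=> k r c Hrc; rewrite mxE.
have [->|rq] := eqVneq r q; last first.
  by apply: EA; rewrite /col_cleared -(ord_ltnS_neq rq).
have [->|cP] := eqVneq c P.
  rewrite pivot_row ?eqxx ?orbT // rconv_Iseq eqxx mulr1 addrN.
  by rewrite Iseq_entry (negbTE qP) mulr0.
have cP' : (c < P)%N by move: Hrc; rewrite /col_cleared (negbTE cP) /= orbF.
rewrite pivot_row ?cP' // rconv_Iseq eq_sym (negbTE cP) mulr0 addr0.
by apply: EA; rewrite /col_cleared cP'.
Qed.

Lemma clear_column (P : 'I_s) A : eqI_on (col_cleared P 0) A ->
  exists2 A', reach A A' & eqI_on (fun _ c => (c < P.+1)%N) A'.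
Proof.
move=> EA; have clear n : exists2 A', reach A A' & eqI_on (col_cleared P n) A'.
  elim: n => [|n [A1 AA1 EA1]]; first by exists A; [exact: rt_refl|].
  have [ns|sn] := ltnP n s; last first.
    exists A1 => //; apply: eqI_on_sub EA1 => r c.
    rewrite /col_cleared => /orP[->//|/andP[-> _]].
    by rewrite (leq_trans (ltn_ord r) sn) !orbT.
  have [qP|qP] := eqVneq (Ordinal ns) P; last first.
    have [A2 A1A2 EA2] := clear_entry qP EA1.
    by exists A2 => //; exact: rt_trans AA1 A1A2.
  exists A1 => //; apply: eqI_on_sub EA1 => r c.
  have [->|rP] := eqVneq r P; first by rewrite /col_cleared eqxx.
  have rq : r != Ordinal ns by rewrite qP.
  by rewrite /col_cleared (negbTE rP) (ord_ltnS_neq rq).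
have [A' AA' EA'] := clear s; exists A' => // k r c cP; apply: EA'.
rewrite /col_cleared ltn_ord !orbT andbT.
have [->|cP'] := eqVneq c P; first by rewrite orbT.
by rewrite -(ord_ltnS_neq cP') cP.
Qed.

Lemma reduce_column (P : 'I_s) A : has_conv_inverse A ->
  eqI_on (fun _ c => (c < P)%N) A ->
  exists2 A', reach A A' & eqI_on (fun _ c => (c < P.+1)%N) A'.
Proof.
move=> Ainv /(normalize_pivot Ainv)[A1 AA1 /clear_column[A2 A1A2 EA2]].
by exists A2 => //; exact: rt_trans AA1 A1A2.
Qed.

Lemma has_conv_inverse_reach_I A : has_conv_inverse A -> reach A I.
Proof.
move=> Ainv.
have reduce p : (p <= s)%N -> exists2 A', reach A A' & eqI_on (fun _ c => (c < p)%N) A'.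
  elim: p => [_|p IH ps]; first by exists A; [exact: rt_refl | move=> k r c; rewrite ltn0].
  have [A1 AA1 EA1] := IH (ltnW ps).
  have [A2 A1A2 EA2] := reduce_column (P := Ordinal ps) (reach_has_conv_inverse AA1 Ainv) EA1.
  by exists A2 => //; exact: rt_trans AA1 A1A2.
have [A' AA' EA'] := reduce s (leqnn s).
suff <- : A' = I by [].
by apply: funext => k; apply/matrixP => r c; apply: EA'.
Qed.

End Elimination.

Theorem proposition4 (R : realType) (d s : nat) (A : mseq R d s) :
  (has_conv_inverse A <-> row_equiv A (@Iseq R d s)) /\
  (row_equiv A (@Iseq R d s) <->
     exists Es : seq (mseq R d s), all_elementary Es /\ A = mconv_list Es).
Proof.
split; last by rewrite row_equivI; exact: reach_I_mconv_list.
split=> [Ainv|/row_equivI IA]; first by left; exact: has_conv_inverse_reach_I.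
exact: reach_has_conv_inverse IA (has_conv_inverse_Iseq R d s).
Qed.
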